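(* Let $\mu\in\mathbb{R}\setminus\{0\}$ and let $g$ be the skew-symmetric-Laplace-uniform density with parameter $\mu$ (defined in the context). Then the mode $M_0$ of $g$ (the point at which $g$ attains its maximum) is $$M_0=\begin{cases}\mu & \text{if } 0<|\mu|<\tfrac12,\\ \operatorname{sign}(\mu)-\mu & \text{if } \tfrac12\le|\mu|<1,\\ 0 & \text{if } |\mu|\ge 1.\end{cases}$$
   Context: For $\mu\in\mathbb{R}\setminus\{0\}$, the skew-symmetric-Laplace-uniform distribution $SSLUD(\mu)$ is the distribution on $\mathbb{R}$ with density $$g(x)=\begin{cases} 0 & \text{if } x/\mu<-1,\\ e^{-|x|}\left(\dfrac{x}{2\mu}+\dfrac12\right) & \text{if } -1\le x/\mu<1,\\ e^{-|x|} & \text{if } x/\mu\ge 1.\end{cases}$$ *)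

From Stdlib Require Import Reals Lra.
Open Scope R_scope.

Definition sslud_density (mu x : R) : R :=
  if Rlt_dec (x / mu) (-1) then 0
  else if Rlt_dec (x / mu) 1 then exp (- Rabs x) * (x / (2 * mu) + 1 / 2)
  else exp (- Rabs x).

Definition sign (x : R) : R :=
  if Rlt_dec 0 x then 1 else if Rlt_dec x 0 then -1 else 0.

Definition is_mode (f : R -> R) (m : R) : Prop := forall x, f x <= f m.

Definition is_unique_mode (f : R -> R) (m : R) : Prop :=
  is_mode f m /\ forall y, is_mode f y -> y = m.

From Stdlib Require Import Reals.
From Stdlib Require Import Lra.
Open Scope R_scope.

(* For mu > 0 the density is 0 left of -mu, and on [-mu, infinity) it is
   dominated by the envelope h(x) = e^{-x} (x + mu) / (2 mu), with equality on
   [0, mu].  The envelope increases up to 1 - mu and decreases afterwards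
   (since 1 + t <= e^t).  So the mode is the point of [0, mu] closest to
   1 - mu: mu when mu <= 1/2, 1 - mu when 1/2 <= mu <= 1, and 0 when mu >= 1,
   where the negative half-line is handled by g(x) < 1/2 = g(0).  The case
   mu < 0 follows from the symmetry g_mu(x) = g_{-mu}(-x). *)

Lemma exp_neg_affine_increasing (c x y : R) :
  x < y -> y + c <= 1 -> exp (- x) * (x + c) < exp (- y) * (y + c).
Proof.
  intros Hxy Hy.
  assert (Hlin : 1 + (x - y) < exp (x - y)) by (apply exp_ineq1; lra).
  assert (Hlt1 : exp (x - y) < 1) by (rewrite <- exp_0; apply exp_increasing; lra).
  assert (Hshift : x + c < exp (x - y) * (y + c)).
  { destruct (Rlt_or_le 0 (y + c)); nra. }
  replace (- y) with (- x + (x - y)) by ring.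
  rewrite exp_plus, Rmult_assoc.
  apply Rmult_lt_compat_l; [apply exp_pos | exact Hshift].
Qed.

Lemma exp_neg_affine_decreasing (c x y : R) :
  1 <= x + c -> x < y -> exp (- y) * (y + c) < exp (- x) * (x + c).
Proof.
  intros Hx Hxy.
  assert (Hlin : 1 + (y - x) < exp (y - x)) by (apply exp_ineq1; lra).
  assert (Hshift : y + c < exp (y - x) * (x + c)) by nra.
  replace (- x) with (- y + (y - x)) by ring.
  rewrite exp_plus, Rmult_assoc.
  apply Rmult_lt_compat_l; [apply exp_pos | exact Hshift].
Qed.

Definition sslud_envelope (mu x : R) : R := exp (- x) * (x + mu) / (2 * mu).

Definition is_strict_max (f : R -> R) (m : R) : Prop := forall x, x <> m -> f x < f m.

Lemma strict_max_unique_mode (f : R -> R) (m : R) :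
  is_strict_max f m -> is_unique_mode f m.
Proof.
  intros Hmax. split.
  - intros x. destruct (Req_dec x m) as [-> | Hx]; [lra | left; auto].
  - intros y Hy. destruct (Req_dec y m) as [| Hym]; [assumption |].
    specialize (Hmax y Hym). specialize (Hy m). lra.
Qed.

Section PositiveParameter.

Variable mu : R.
Hypothesis mu_pos : 0 < mu.

Lemma ratio_bounds (a x : R) :
  (x < a * mu -> x / mu < a) /\ (a * mu <= x -> a <= x / mu).
Proof.
  assert (Hx : x = x / mu * mu) by (field; lra).
  split; intros; nra.
Qed.

Lemma sslud_density_below (x : R) : x < - mu -> sslud_density mu x = 0.
Proof.
  intros Hx. unfold sslud_density.
  assert (Hratio : x / mu < -1) by (apply ratio_bounds; lra).
  destruct (Rlt_dec (x / mu) (-1)); [reflexivity | lra].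
Qed.

Lemma sslud_density_middle (x : R) :
  - mu <= x < mu -> sslud_density mu x = exp (- Rabs x) * (x + mu) / (2 * mu).
Proof.
  intros Hx. unfold sslud_density.
  assert (Hratio : -1 <= x / mu < 1) by (split; apply ratio_bounds; lra).
  destruct (Rlt_dec (x / mu) (-1)); [lra |].
  destruct (Rlt_dec (x / mu) 1); [| lra].
  field. lra.
Qed.

Lemma sslud_density_above (x : R) : mu <= x -> sslud_density mu x = exp (- x).
Proof.
  intros Hx. unfold sslud_density.
  assert (Hratio : 1 <= x / mu) by (apply ratio_bounds; lra).
  rewrite Rabs_right by lra.
  destruct (Rlt_dec (x / mu) (-1)); [lra |].
  destruct (Rlt_dec (x / mu) 1); [lra | reflexivity].
Qed.

Lemma sslud_density_0 : sslud_density mu 0 = 1 / 2.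
Proof.
  rewrite sslud_density_middle by lra.
  rewrite Rabs_R0, Ropp_0, exp_0. field. lra.
Qed.

Lemma sslud_density_neg_lt_half (x : R) : x < 0 -> sslud_density mu x < 1 / 2.
Proof.
  intros Hx. destruct (Rlt_or_le x (- mu)) as [Hbelow | Hmid].
  - rewrite sslud_density_below by assumption. lra.
  - rewrite sslud_density_middle, Rabs_left, Ropp_involutive by lra.
    assert (Hexp : exp x < 1) by (rewrite <- exp_0; apply exp_increasing; lra).
    pose proof (exp_pos x).
    apply Rmult_lt_reg_r with (2 * mu); [lra |].
    unfold Rdiv. rewrite Rmult_assoc, Rinv_l by lra. nra.
Qed.

Lemma sslud_density_le_envelope (x : R) :
  - mu <= x -> sslud_density mu x <= sslud_envelope mu x.
Proof.
  intros Hx. unfold sslud_envelope, Rdiv.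
  assert (Hscale : 0 < / (2 * mu)) by (apply Rinv_0_lt_compat; lra).
  destruct (Rlt_or_le x mu) as [Hlt | Hge].
  - rewrite sslud_density_middle by lra. unfold Rdiv.
    apply Rmult_le_compat_r; [lra |]. apply Rmult_le_compat_r; [lra |].
    destruct (Rlt_or_le x 0).
    + rewrite Rabs_left by assumption. left. apply exp_increasing. lra.
    + rewrite Rabs_right by lra. lra.
  - rewrite sslud_density_above by assumption.
    pose proof (exp_pos (- x)).
    assert (H1 : 1 <= (x + mu) * / (2 * mu)).
    { apply Rmult_le_reg_r with (2 * mu); [lra |].
      rewrite Rmult_assoc, Rinv_l; lra. }
    rewrite Rmult_assoc. nra.
Qed.

Lemma sslud_density_eq_envelope (x : R) :
  0 <= x <= mu -> sslud_density mu x = sslud_envelope mu x.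
Proof.
  intros Hx. unfold sslud_envelope.
  destruct (Req_dec x mu) as [-> | Hne].
  - rewrite sslud_density_above by lra. field. lra.
  - rewrite sslud_density_middle, Rabs_right by lra. reflexivity.
Qed.

Lemma sslud_envelope_increasing (x y : R) :
  x < y -> y <= 1 - mu -> sslud_envelope mu x < sslud_envelope mu y.
Proof.
  intros Hxy Hy. unfold sslud_envelope, Rdiv.
  apply Rmult_lt_compat_r; [apply Rinv_0_lt_compat; lra |].
  apply exp_neg_affine_increasing; lra.
Qed.

Lemma sslud_envelope_decreasing (x y : R) :
  1 - mu <= x -> x < y -> sslud_envelope mu y < sslud_envelope mu x.
Proof.
  intros Hx Hxy. unfold sslud_envelope, Rdiv.
  apply Rmult_lt_compat_r; [apply Rinv_0_lt_compat; lra |].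
  apply exp_neg_affine_decreasing; lra.
Qed.

Lemma sslud_strict_max_small : mu <= 1 / 2 -> is_strict_max (sslud_density mu) mu.
Proof.
  intros Hmu x Hx.
  rewrite (sslud_density_above mu) by lra.
  destruct (Rlt_or_le x (- mu)) as [Hbelow | Hx_ge].
  - rewrite sslud_density_below by assumption. apply exp_pos.
  - destruct (Rlt_or_le x mu) as [Hlt | Hge].
    + apply Rle_lt_trans with (sslud_envelope mu x);
        [apply sslud_density_le_envelope; lra |].
      replace (exp (- mu)) with (sslud_envelope mu mu)
        by (unfold sslud_envelope; field; lra).
      apply sslud_envelope_increasing; lra.
    + rewrite sslud_density_above by assumption.
      apply exp_increasing. lra.
Qed.

Lemma sslud_strict_max_medium :
  1 / 2 <= mu <= 1 -> is_strict_max (sslud_density mu) (1 - mu).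
Proof.
  intros Hmu x Hx.
  rewrite (sslud_density_eq_envelope (1 - mu)) by lra.
  destruct (Rlt_or_le x (- mu)) as [Hbelow | Hx_ge].
  - rewrite sslud_density_below by assumption.
    unfold sslud_envelope. pose proof (exp_pos (- (1 - mu))).
    apply Rdiv_lt_0_compat; nra.
  - apply Rle_lt_trans with (sslud_envelope mu x);
      [apply sslud_density_le_envelope; lra |].
    destruct (Rlt_or_le x (1 - mu)).
    + apply sslud_envelope_increasing; lra.
    + apply sslud_envelope_decreasing; lra.
Qed.

Lemma sslud_strict_max_large : 1 <= mu -> is_strict_max (sslud_density mu) 0.
Proof.
  intros Hmu x Hx. rewrite sslud_density_0.
  destruct (Rlt_or_le x 0) as [Hneg | Hnonneg].
  - apply sslud_density_neg_lt_half. assumption.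
  - apply Rle_lt_trans with (sslud_envelope mu x);
      [apply sslud_density_le_envelope; lra |].
    replace (1 / 2) with (sslud_envelope mu 0)
      by (unfold sslud_envelope; rewrite Ropp_0, exp_0; field; lra).
    apply sslud_envelope_decreasing; lra.
Qed.

End PositiveParameter.

Lemma sslud_density_opp (mu x : R) :
  mu <> 0 -> sslud_density (- mu) (- x) = sslud_density mu x.
Proof.
  intros Hmu. unfold sslud_density.
  replace (- x / - mu) with (x / mu) by (field; assumption).
  replace (- x / (2 * - mu)) with (x / (2 * mu)) by (field; assumption).
  rewrite Rabs_Ropp. reflexivity.
Qed.

Lemma sslud_strict_max_opp (mu m : R) :
  mu <> 0 -> is_strict_max (sslud_density (- mu)) (- m) ->
  is_strict_max (sslud_density mu) m.
Proof.
  intros Hmu Hmax x Hx.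
  rewrite <- (sslud_density_opp mu x), <- (sslud_density_opp mu m) by assumption.
  apply Hmax. lra.
Qed.

Theorem mainTheorem4 (mu : R) (hmu : mu <> 0) :
  (0 < Rabs mu < 1 / 2 -> is_unique_mode (sslud_density mu) mu) /\
  (1 / 2 <= Rabs mu < 1 -> is_unique_mode (sslud_density mu) (sign mu - mu)) /\
  (1 <= Rabs mu -> is_unique_mode (sslud_density mu) 0).
Proof.
  unfold sign.
  destruct (Rlt_or_le 0 mu) as [Hpos | Hnonpos].
  - rewrite Rabs_right by lra.
    destruct (Rlt_dec 0 mu); [| lra].
    split; [| split]; intros; apply strict_max_unique_mode.
    + apply sslud_strict_max_small; lra.
    + apply sslud_strict_max_medium; lra.
    + apply sslud_strict_max_large; lra.
  - assert (Hneg : 0 < - mu) by lra.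
    rewrite Rabs_left by lra.
    destruct (Rlt_dec 0 mu); [lra |]. destruct (Rlt_dec mu 0); [| lra].
    split; [| split]; intros; apply strict_max_unique_mode, sslud_strict_max_opp; auto.
    + apply sslud_strict_max_small; lra.
    + replace (- (-1 - mu)) with (1 - - mu) by ring.
      apply sslud_strict_max_medium; lra.
    + rewrite Ropp_0. apply sslud_strict_max_large; lra.
Qed.
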